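(* Let $\mathbf X=(X_1,\dots,X_k)$, $2\le k\le n-1$, be homogeneous coordinates of proper cycles and $S$ a vector with $(S\mid S)\le0$, with $X_1,\dots,X_k,S$ linearly independent and $\Delta(\mathbf X,S)<0$. Let $y$ be a proper cycle with $y\notin\langle\mathbf x,s\rangle$ and $(Y\mid S)\ne0$. Define $h(x)=\Delta(X,Y,S)/(\Delta(X,S)\Delta(Y,S))$ on the open set of $x\in\langle\mathbf x,s\rangle$ with $\Delta(X,S)\neq0$. Let $p=P_{\langle\mathbf x,s\rangle}(y)$ (coordinates $P_{\langle\mathbf X,S\rangle}Y$) and assume $p\neq s$. Then $h$ is defined at $p$, $h(p)=\delta(\mathbf x,y,s)$, and $p$ is a critical point of $h$. If moreover $(S\mid S)<0$, then there is a cycle $x_0\in\langle\mathbf x,s\rangle\cap\langle s\rangle^\perp$, $x_0\neq s$, with $(X_0\mid Y)=0$; every such $x_0$ is a critical point of $h$ and $h(x_0)=1/(S\mid S)$.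
   Context: Let $n\ge 3$. For $X=(\xi_0,\boldsymbol\xi_1,\xi_2,\xi_3)$ and $Y=(\eta_0,\boldsymbol\eta_1,\eta_2,\eta_3)$ in $\mathbb{R}^{n+3}=\mathbb{R}\times\mathbb{R}^n\times\mathbb{R}\times\mathbb{R}$, the Lie product is the nondegenerate symmetric bilinear form $(X\mid Y)=\xi_0\eta_2+\boldsymbol\xi_1\cdot\boldsymbol\eta_1+\xi_2\eta_0-\xi_3\eta_3$. Points of $\mathbb{P}^{n+2}$ are cycles; lowercase letters denote cycles and uppercase letters their homogeneous coordinate vectors; a cycle is proper if $(X\mid X)=0$. For a list $\mathbf X$, $\langle\mathbf X\rangle$ is its span, $\langle\mathbf x\rangle$ the projective subspace, $\langle s\rangle^\perp$ the projectivization of $\{Z:(Z\mid S)=0\}$, and $\Delta(\mathbf X)=\det[(X_i\mid X_j)]$. $P_{\langle\mathbf X,S\rangle}$ is the Lie orthogonal projection onto $\langle\mathbf X,S\rangle$ along $\langle\mathbf X,S\rangle^\perp$, and $P_{\langle\mathbf x,s\rangle}$ the induced projective map. The discriminant is $\delta(\mathbf x,y,s)=\Delta(\mathbf X,Y,S)/(\Delta(\mathbf X,S)\Delta(Y,S))$. *)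

From HB Require Import structures.
From mathcomp Require Import all_boot all_order all_algebra.
Set Implicit Arguments. Unset Strict Implicit. Unset Printing Implicit Defensive.
Import Order.TTheory GRing.Theory Num.Theory.
Local Open Scope ring_scope.

(* Vectors of R^{n+3} = R x R^n x R x R are row vectors 'rV[R]_(n.+3):
   index 0 = xi_0, indices 1..n = bold xi_1, index n+1 = xi_2, index n+2 = xi_3. *)

Definition lie {R : realFieldType} {n : nat} (X Y : 'rV[R]_(n.+3)) : R :=
  X 0 ord0 * Y 0 (inord n.+1)
  + \sum_(i < n) X 0 (inord i.+1) * Y 0 (inord i.+1)
  + X 0 (inord n.+1) * Y 0 ord0
  - X 0 (inord n.+2) * Y 0 (inord n.+2).

Definition Delta {R : realFieldType} {n : nat} (s : seq 'rV[R]_(n.+3)) : R :=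
  \det (\matrix_(i < size s, j < size s) lie s`_i s`_j).

Definition hfun {R : realFieldType} {n : nat} (Y S X : 'rV[R]_(n.+3)) : R :=
  Delta [:: X; Y; S] / (Delta [:: X; S] * Delta [:: Y; S]).

Definition discr {R : realFieldType} {n : nat}
    (Xs : seq 'rV[R]_(n.+3)) (Y S : 'rV[R]_(n.+3)) : R :=
  Delta (Xs ++ [:: Y; S]) / (Delta (rcons Xs S) * Delta [:: Y; S]).

Definition has_deriv {R : realFieldType} (f : R -> R) (t0 l : R) : Prop :=
  forall eps : R, 0 < eps -> exists2 d : R, 0 < d &
    forall t : R, 0 < `|t - t0| < d -> `|(f t - f t0) / (t - t0) - l| < eps.

(* x (coordinates P in the subspace W) is a critical point of a function h
   defined on (an open subset of) the projective subspace <W>: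
   all directional derivatives of h at P along W vanish. *)
Definition critical_point {R : realFieldType} {n : nat}
    (W : {vspace 'rV[R]_(n.+3)}) (h : 'rV[R]_(n.+3) -> R) (P : 'rV[R]_(n.+3)) : Prop :=
  forall V, V \in W -> has_deriv (fun t => h (P + t *: V)) 0 0.

From HB Require Import structures.
From mathcomp Require Import all_boot all_order all_algebra perm ring lra.
Import Order.TTheory GRing.Theory Num.Theory.
Local Open Scope ring_scope.

(* Everything reduces to Gram determinants of the Lie product, whose
   signature is (n + 1, 2).
   Writing h = hnum / (hden * -(Y|S)^2) with hnum, hden polarized quadratic
   forms, X is a critical point with value a / -(Y|S)^2 as soon as
   hnum(X, .) = a hden(X, .) on <x, s>.  This holds for X = P with
   a = -(P|P), and for X0 orthogonal to S and Y with a = -(Y|S)^2 / (S|S),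
   which gives the theorem. *)

Set Implicit Arguments. Unset Strict Implicit.

Section LieProduct.
Variables (R : realFieldType) (n : nat).
Local Notation V := 'rV[R]_(n.+3).

Lemma lieC (X Y : V) : lie X Y = lie Y X.
Proof. by rewrite /lie; under eq_bigr do rewrite mulrC; ring. Qed.

Lemma lieDZl a (X Y Z : V) : lie (a *: X + Y) Z = a * lie X Z + lie Y Z.
Proof.
rewrite /lie !mxE; under eq_bigr do rewrite !mxE mulrDl -mulrA.
by rewrite big_split /= -mulr_sumr; ring.
Qed.

Lemma lie0l (Z : V) : lie 0 Z = 0.
Proof. by rewrite /lie big1 => [|i _]; rewrite !mxE ?mul0r //; ring. Qed.

Lemma lieDl (X Y Z : V) : lie (X + Y) Z = lie X Z + lie Y Z.
Proof. by have := lieDZl 1 X Y Z; rewrite scale1r mul1r. Qed.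

Lemma lieZl a (X Z : V) : lie (a *: X) Z = a * lie X Z.
Proof. by have := lieDZl a X 0 Z; rewrite !addr0 lie0l addr0. Qed.

Lemma lieBl (X Y Z : V) : lie (X - Y) Z = lie X Z - lie Y Z.
Proof. by rewrite addrC -scaleN1r lieDZl mulN1r addrC. Qed.

Lemma lieDr (X Y Z : V) : lie Z (X + Y) = lie Z X + lie Z Y.
Proof. by rewrite !(lieC Z) lieDl. Qed.

Lemma lieZr a (X Z : V) : lie Z (a *: X) = a * lie Z X.
Proof. by rewrite !(lieC Z) lieZl. Qed.

Lemma lieBr (X Y Z : V) : lie Z (X - Y) = lie Z X - lie Z Y.
Proof. by rewrite !(lieC Z) lieBl. Qed.

Lemma lie_suml m (F : 'I_m -> V) Z : lie (\sum_i F i) Z = \sum_i lie (F i) Z.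
Proof. exact: (big_morph (fun X => lie X Z) (fun X Y => lieDl X Y Z) (lie0l Z)). Qed.

Lemma lie_sumr m (F : 'I_m -> V) Z : lie Z (\sum_i F i) = \sum_i lie Z (F i).
Proof. by rewrite lieC lie_suml; apply: eq_bigr => i _; apply: lieC. Qed.

End LieProduct.

Section Gram.
Variables (R : realFieldType) (n : nat).
Local Notation V := 'rV[R]_(n.+3).

Definition gram (f : nat -> V) m := \det (\matrix_(i < m, j < m) lie (f i) (f j)).

Lemma DeltaE (s : seq V) : Delta s = gram (nth 0 s) (size s).
Proof. by []. Qed.

Lemma gram_lin m (f g : nat -> V) (B : 'M[R]_m) :
  (forall i : 'I_m, g i = \sum_j B i j *: f j) -> gram g m = \det B ^+ 2 * gram f m.
Proof.
move=> gE; rewrite /gram.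
have -> : \matrix_(i < m, j < m) lie (g i) (g j)
    = B *m \matrix_(i < m, j < m) lie (f i) (f j) *m B^T.
  apply/matrixP => i j; rewrite !mxE !gE lie_suml.
  under [RHS]eq_bigr do rewrite !mxE big_distrl.
  rewrite exchange_big /=; apply: eq_bigr => k _.
  rewrite lieZl lie_sumr big_distrr /=; apply: eq_bigr => l _.
  by rewrite lieZr !mxE; ring.
by rewrite !det_mulmx det_tr; ring.
Qed.

Lemma sum_delta m (F : 'I_m -> V) (i : 'I_m) : \sum_j (i == j)%:R *: F j = F i.
Proof.
rewrite (bigD1 i) //= eqxx scale1r big1 ?addr0 // => j ji.
by rewrite eq_sym (negPf ji) scale0r.
Qed.

Lemma gram_perm m (f g : nat -> V) (s : 'S_m) :
  (forall i : 'I_m, g i = f (s i)) -> gram g m = gram f m.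
Proof.
move=> gE; rewrite (@gram_lin m f g (perm_mx s)) => [|i].
  by rewrite det_perm sqrr_sign mul1r.
rewrite gE -(sum_delta (fun j : 'I_m => f j) (s i)).
by apply: eq_bigr => j _; rewrite /perm_mx !mxE.
Qed.

Lemma Delta_perm (s t : seq V) : perm_eq s t -> Delta s = Delta t.
Proof.
move=> st; have /tuple_permP [p sE] : perm_eq s (in_tuple t) by [].
rewrite !DeltaE sE size_tuple; apply: (gram_perm (s := p)) => i.
by rewrite -[LHS](tnth_nth 0) tnth_mktuple (tnth_nth 0).
Qed.

Lemma gram_orth0 m (f : nat -> V) :
  (forall j, (j < m)%N -> lie (f 0%N) (f j.+1) = 0) ->
  gram f m.+1 = lie (f 0%N) (f 0%N) * gram (fun i => f i.+1) m.
Proof.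
move=> f0_orth; rewrite /gram (expand_det_row _ ord0) big_ord_recl big1 => [|j _].
  rewrite addr0 !mxE /cofactor expr0 mul1r; congr (_ * \det _).
  by apply/matrixP => i j; rewrite !mxE.
by rewrite mxE f0_orth ?mul0r.
Qed.

Lemma Delta_cons_orth (Z : V) (s : seq V) :
  (forall X, X \in s -> lie Z X = 0) -> Delta (Z :: s) = lie Z Z * Delta s.
Proof. by move=> Zs; rewrite DeltaE gram_orth0 // => j js; apply/Zs/mem_nth. Qed.

Lemma Delta2 (X Z : V) : Delta [:: X; Z] = lie X X * lie Z Z - lie X Z ^+ 2.
Proof.
rewrite DeltaE /gram (expand_det_row _ ord0) !big_ord_recl big_ord0 /cofactor.
by rewrite !det_mx11 !mxE /= (lieC Z); ring.
Qed.

Lemma Delta3 (X Y Z : V) : Delta [:: X; Y; Z] =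
  lie X X * lie Y Y * lie Z Z + 2 * lie X Y * lie X Z * lie Y Z
  - lie X X * lie Y Z ^+ 2 - lie Y Y * lie X Z ^+ 2 - lie Z Z * lie X Y ^+ 2.
Proof.
rewrite DeltaE /gram (expand_det_row _ ord0) !big_ord_recl big_ord0 /cofactor.
rewrite !(expand_det_row _ ord0) !big_ord_recl !big_ord0 /cofactor !det_mx11.
by rewrite !mxE /= (lieC Y X) (lieC Z X) (lieC Z Y); ring.
Qed.
End Gram.

Section GramSchmidt.
Variables (R : realFieldType) (n : nat).
Local Notation V := 'rV[R]_(n.+3).

Definition comb m (f : nat -> V) (c : 'I_m -> R) : V := \sum_(i < m) c i *: f i.

Lemma lie_combl m (f : nat -> V) (c : 'I_m -> R) Z :
  lie (comb f c) Z = \sum_(i < m) c i * lie (f i) Z.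
Proof. by rewrite /comb lie_suml; apply: eq_bigr => i _; rewrite lieZl. Qed.

Lemma lie_comb_orth m (f : nat -> V) (c : 'I_m -> R) Z :
  (forall i : 'I_m, lie (f i) Z = 0) -> lie (comb f c) Z = 0.
Proof. by move=> fZ; rewrite lie_combl big1 // => i _; rewrite fZ mulr0. Qed.

Lemma comb_delta m (f : nat -> V) (j : 'I_m) :
  comb f (fun i : 'I_m => (i == j)%:R) = f j.
Proof.
rewrite /comb -(sum_delta (fun i : 'I_m => f i) j).
by apply: eq_bigr => i _; rewrite eq_sym.
Qed.

Lemma comb_add m (f : nat -> V) (c : 'I_m -> R) (j : 'I_m) t :
  comb f (fun i : 'I_m => c i + t * (i == j)%:R) = comb f c + t *: f j.
Proof.
rewrite /comb; under eq_bigr do rewrite scalerDl -scalerA.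
by rewrite big_split /= -scaler_sumr -(comb_delta f j).
Qed.

Lemma gram_exchange m (f h : nat -> V) (j : 'I_m.+1) (c : 'I_m.+1 -> R) :
  h 0%N = comb f c -> (forall i, (i < m)%N -> h i.+1 = f (bump j i)) ->
  gram h m.+1 = c j ^+ 2 * gram f m.+1.
Proof.
move=> h0 hS.
pose B : 'M[R]_m.+1 := \matrix_(i, l)
  if unlift ord0 i is Some i' then (lift j i' == l)%:R else c l.
have detB : \det B = (-1) ^+ j * c j.
  rewrite (expand_det_col _ j) big_ord_recl big1 => [|i _]; last first.
    by rewrite mxE liftK eq_sym (negPf (neq_lift _ _)) mul0r.
  rewrite addr0 mxE unlift_none /cofactor.
  rewrite (_ : row' _ _ = 1%:M) ?det1 ?mulr1 ?add0n 1?mulrC //.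
  by apply/matrixP => a b; rewrite !mxE liftK (inj_eq lift_inj).
rewrite (gram_lin (f := f) (g := h) (B := B)) ?detB ?exprMn ?sqrr_sign ?mul1r // => i.
case: (unliftP ord0 i) => [i'|] ->; under eq_bigr do rewrite mxE.
  by rewrite liftK sum_delta lift0 hS.
by rewrite unlift_none h0.
Qed.

Definition perp0 (f : nat -> V) : nat -> V :=
  fun i => f i.+1 - (lie (f i.+1) (f 0%N) / lie (f 0%N) (f 0%N)) *: f 0%N.

Lemma lie_perp0 (f : nat -> V) i :
  lie (f 0%N) (f 0%N) != 0 -> lie (perp0 f i) (f 0%N) = 0.
Proof. by move=> f0; rewrite /perp0 lieBl lieZl mulfVK // subrr. Qed.

Lemma lie_perp0_orth (f : nat -> V) i Z :
  lie (f i.+1) Z = 0 -> lie (f 0%N) Z = 0 -> lie (perp0 f i) Z = 0.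
Proof. by move=> fiZ f0Z; rewrite /perp0 lieBl lieZl fiZ f0Z mulr0 subrr. Qed.

Lemma gram_schur m (f : nat -> V) : lie (f 0%N) (f 0%N) != 0 ->
  gram f m.+1 = lie (f 0%N) (f 0%N) * gram (perp0 f) m.
Proof.
move=> f0; set a := lie (f 0%N) (f 0%N).
pose g i := if i is k.+1 then perp0 f k else f 0%N.
pose B : 'M[R]_m.+1 := \matrix_(i, j) ((i == j)%:R -
   ((j == ord0) && (i != ord0))%:R * (lie (f i) (f 0%N) / a)).
have detB : \det B = 1.
  rewrite det_trig; last first.
    apply/is_trig_mxP => i j ij; rewrite mxE -val_eqE /= ltn_eqF //.
    by case: (unliftP ord0 j) ij => [j'|] -> //= _; rewrite mul0r subrr.
  apply: big1 => i _; rewrite mxE eqxx.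
  by case: (unliftP ord0 i) => [i'|] -> /=; rewrite mul0r subr0.
have -> : gram f m.+1 = gram g m.+1.
  rewrite (gram_lin (f := f) (g := g) (B := B)) ?detB ?expr1n ?mul1r // => i.
  under eq_bigr do rewrite mxE scalerBl.
  rewrite sumrB sum_delta (bigD1 ord0) //= big1 => [|j /negPf j0]; last first.
    by rewrite j0 mul0r scale0r.
  rewrite addr0; case: (unliftP ord0 i) => [i'|] -> /=.
    by rewrite mul1r /bump /= add1n.
  by rewrite /= mulr0n mul0r scale0r subr0.
rewrite gram_orth0 => [//|j _].
by rewrite /g lieC lie_perp0.
Qed.

Lemma comb_perp0 m (f : nat -> V) (d : 'I_m -> R) :
  exists e : 'I_m.+1 -> R, comb (perp0 f) d = comb f e.
Proof.
exists (fun i => if unlift ord0 i is Some i' then d i' else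
   - \sum_(k < m) d k * (lie (f k.+1) (f 0%N) / lie (f 0%N) (f 0%N))).
rewrite /comb big_ord_recl unlift_none.
rewrite [in RHS](eq_bigr (fun i : 'I_m => d i *: f i.+1)) => [|i _]; last first.
  by rewrite liftK lift0.
rewrite /perp0; under [in LHS]eq_bigr do rewrite scalerBr scalerA.
by rewrite sumrB -scaler_suml scaleNr addrC.
Qed.

Lemma comb_split0 m (f : nat -> V) (c : 'I_m.+1 -> R) : exists a,
  comb f c = a *: f 0%N + comb (perp0 f) (fun i => c (lift ord0 i)).
Proof.
exists (c ord0 + \sum_(i < m) c (lift ord0 i) *
  (lie (f i.+1) (f 0%N) / lie (f 0%N) (f 0%N))).
rewrite /comb big_ord_recl /perp0.
under [X in _ = _ + X]eq_bigr do rewrite scalerBr scalerA.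
under [in LHS]eq_bigr do rewrite lift0.
by rewrite sumrB scalerDl -scaler_suml addrACA subrr addr0.
Qed.

End GramSchmidt.

Lemma exists_kernel2 (R : fieldType) m (a b : 'I_m -> R) : (2 < m)%N ->
  exists2 c : 'I_m -> R, exists i, c i != 0 &
    \sum_i c i * a i = 0 /\ \sum_i c i * b i = 0.
Proof.
move=> m3; pose M : 'M[R]_m := \matrix_(i, j)
  if j == 0%N :> nat then a i else if j == 1%N :> nat then b i else 0.
have /det0P [v v0 vM] : \det M == 0.
  by rewrite (expand_det_col _ (Ordinal m3)) big1 // => i _; rewrite mxE mul0r.
exists (fun i => v 0 i).
  have /existsP [i vi] : [exists i, v 0 i != 0].
    apply: contraR v0 => /existsPn v0; apply/eqP/rowP => i.
    by rewrite mxE; apply/eqP/negPn/v0.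
  by exists i.
have vMj j : \sum_i v 0 i * M i j = 0.
  by have := congr1 (fun r : 'rV_m => r 0 j) vM; rewrite !mxE.
split.
  by have := vMj (Ordinal (ltnW (ltnW m3))); under eq_bigr do rewrite mxE.
by have := vMj (Ordinal (ltnW m3)); under eq_bigr do rewrite mxE.
Qed.

Section Signature.
Variables (R : realFieldType) (n : nat).
Local Notation V := 'rV[R]_(n.+3).

(* On the hyperplanes xi_3 = 0, xi_0 = xi_2 the Lie product is positive
   semidefinite: (Z|Z) = 2 xi_0^2 + |xi_1|^2. *)
Lemma lie_self_ge0 (Z : V) :
  Z 0 (inord n.+2) = 0 -> Z 0 ord0 = Z 0 (inord n.+1) -> 0 <= lie Z Z.
Proof.
move=> Z3 Z02; rewrite /lie Z3 -Z02 mulr0 subr0.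
have : 0 <= \sum_(i < n) Z 0 (inord i.+1) * Z 0 (inord i.+1).
  by apply: sumr_ge0 => i _; rewrite -expr2 sqr_ge0.
by have := sqr_ge0 (Z 0 ord0); rewrite expr2; lra.
Qed.

Lemma no_three_negative (A B C : V) :
  lie A A < 0 -> lie B B < 0 -> lie C C < 0 ->
  lie A B = 0 -> lie A C = 0 -> lie B C = 0 -> False.
Proof.
move=> A0 B0 C0 AB AC BC; pose f := nth 0 [:: A; B; C].
have [c [i ci] [c3 c02]] := exists_kernel2
  (fun i : 'I_3 => f i 0 (inord n.+2))
  (fun i : 'I_3 => f i 0 ord0 - f i 0 (inord n.+1)) isT.
set Z := comb f c.
have Zk k : Z 0 k = \sum_i c i * f i 0 k.
  by rewrite /Z /comb summxE; under eq_bigr do rewrite !mxE.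
have : 0 <= lie Z Z.
  apply: lie_self_ge0; first by rewrite Zk.
  apply/eqP; rewrite -subr_eq0 !Zk -sumrB; apply/eqP; rewrite -[RHS]c02.
  by apply: eq_bigr => j _; rewrite mulrBr.
set c0 := c ord0; set c1 := c (lift ord0 ord0); set c2 := c (lift ord0 (lift ord0 ord0)).
have -> : lie Z Z = c0 ^+ 2 * lie A A + c1 ^+ 2 * lie B B + c2 ^+ 2 * lie C C.
  rewrite /Z /comb !big_ord_recl big_ord0 addr0 -/c0 -/c1 -/c2 /=.
  rewrite /f /bump /= !(lieDl, lieDr, lieZl, lieZr).
  rewrite (lieC B A) (lieC C A) (lieC C B) AB AC BC.
  by ring.
have sq0 (x y : R) : y < 0 -> x ^+ 2 * y <= 0.
  by move=> y0; apply: mulr_ge0_le0 (sqr_ge0 x) (ltW y0).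
have eq0 (x y : R) : y < 0 -> x ^+ 2 * y = 0 -> x = 0.
  by move=> /ltr0_neq0 y0 /eqP; rewrite mulf_eq0 (negPf y0) orbF sqrf_eq0 => /eqP.
move=> Z0; have k0 := sq0 c0 _ A0; have k1 := sq0 c1 _ B0; have k2 := sq0 c2 _ C0.
have [c0E c1E c2E] : [/\ c0 = 0, c1 = 0 & c2 = 0].
  by split; [apply: eq0 A0 _ | apply: eq0 B0 _ | apply: eq0 C0 _]; lra.
move: ci; apply/negP/negPn/eqP.
case: (unliftP ord0 i) => [i1|] ->; last exact: c0E.
case: (unliftP ord0 i1) => [i2|] ->; last exact: c1E.
by rewrite (ord1 i2).
Qed.

Lemma isotropic_orth (u w : V) :
  (forall t, 0 <= lie (u + t *: w) (u + t *: w)) ->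
  0 <= lie w w -> lie u u = 0 -> lie u w = 0.
Proof.
move=> cone w0 u0.
have E t : lie (u + t *: w) (u + t *: w) = 2 * t * lie u w + t ^+ 2 * lie w w.
  by rewrite !(lieDl, lieDr, lieZl, lieZr) u0 (lieC w u); ring.
move: (lie u w) (lie w w) w0 E => a b b0 E.
have b1 : 0 < b + 1 by lra.
have := cone (- a / (b + 1)); rewrite E.
have -> : 2 * (- a / (b + 1)) * a + (- a / (b + 1)) ^+ 2 * b
    = - (a ^+ 2 * (b + 2)) / (b + 1) ^+ 2 by field; lra.
rewrite pmulr_lge0 ?invr_gt0 ?exprn_gt0 // oppr_ge0 pmulr_lle0; last by lra.
by move=> a0; apply/eqP; rewrite -sqrf_eq0 eq_le a0 sqr_ge0.
Qed.

Lemma gram_ge0 m (f : nat -> V) :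
  (forall c : 'I_m -> R, 0 <= lie (comb f c) (comb f c)) -> 0 <= gram f m.
Proof.
elim: m f => [|m IH] f psd; first by rewrite /gram det_mx00 ler01.
have fj_ge0 (j : 'I_m.+1) : 0 <= lie (f j) (f j).
  by have := psd (fun i => (i == j)%:R); rewrite comb_delta.
have := fj_ge0 ord0; rewrite le0r => /orP [/eqP f00 | f0_gt0].
  rewrite gram_orth0 ?f00 ?mul0r // => j jm; pose J := @Ordinal m.+1 j.+1 jm.
  apply: isotropic_orth f00 => [t|]; last exact: (fj_ge0 J).
  by have := psd (fun i => (i == ord0)%:R + t * (i == J)%:R); rewrite comb_add comb_delta.
rewrite gram_schur ?lt0r_neq0 //; apply: mulr_ge0 (ltW f0_gt0) (IH _ _) => d.
by have [e ->] := comb_perp0 f d.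
Qed.

(* In the orthogonal of a negative vector S there is at most one negative
   direction; hence a family orthogonal to S with a negative combination has
   a nonpositive Gram determinant.  Proof: exchange a suitable f_j for the
   negative combination u, pivot on u, and note that the remaining projected
   family, orthogonal to both u and S, spans a positive semidefinite space. *)
Lemma gram_le0 (S : V) m (f : nat -> V) (c : 'I_m -> R) :
  lie S S < 0 -> (forall i : 'I_m, lie (f i) S = 0) ->
  lie (comb f c) (comb f c) < 0 -> gram f m <= 0.
Proof.
case: m f c => [|m] f c S0 fS u0.
  by move: u0; rewrite /comb big_ord0 lie0l ltxx.
have [j cj] : exists j, c j != 0.
  apply/existsP; apply: contraTT u0 => /existsPn c0.
  rewrite /comb big1 => [|i _]; first by rewrite lie0l ltxx.
  by rewrite (eqP (negPn (c0 i))) scale0r.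
pose h i := if i is i'.+1 then f (bump j i') else comb f c.
have exch : gram h m.+1 = c j ^+ 2 * gram f m.+1 by apply: gram_exchange.
have perp_ge0 : 0 <= gram (perp0 h) m.
  apply: gram_ge0 => d; rewrite leNgt; apply/negP => d0.
  apply: (no_three_negative d0 u0 S0); last exact: lie_comb_orth.
    by apply: lie_comb_orth => i; apply: lie_perp0; apply: ltr0_neq0.
  apply: lie_comb_orth => i; apply: lie_perp0_orth; last exact: lie_comb_orth.
  exact: (fS (lift j i)).
have : c j ^+ 2 * gram f m.+1 <= 0.
  by rewrite -exch gram_schur ?ltr0_neq0 // mulr_le0_ge0 // ltW.
by rewrite pmulr_rle0 // lt0r sqrf_eq0 cj sqr_ge0.
Qed.

Lemma gram_eq0 m (f : nat -> V) (c : 'I_m -> R) : comb f c != 0 ->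
  (forall j : 'I_m, lie (comb f c) (f j) = 0) -> gram f m = 0.
Proof.
move=> u0 rad; apply/eqP/det0P; exists (\row_i c i).
  apply: contra u0 => /eqP c0; apply/eqP; rewrite /comb big1 // => i _.
  by have := congr1 (fun r : 'rV_m => r 0 i) c0; rewrite !mxE => ->; rewrite scale0r.
apply/rowP => j; rewrite !mxE -[RHS](rad j) lie_combl.
by apply: eq_bigr => i _; rewrite !mxE.
Qed.

Lemma gram_gt0_pos (S : V) m (f : nat -> V) (c : 'I_m -> R) :
  lie S S < 0 -> (forall i : 'I_m, lie (f i) S = 0) -> 0 < gram f m ->
  comb f c != 0 -> 0 < lie (comb f c) (comb f c).
Proof.
move=> S0 fS G0 u0.
have psd (d : 'I_m -> R) : 0 <= lie (comb f d) (comb f d).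
  by rewrite leNgt; apply/negP => d0; move: (gram_le0 S0 fS d0); rewrite leNgt G0.
rewrite lt0r psd andbT; apply/eqP => uu.
have rad (j : 'I_m) : lie (comb f c) (f j) = 0.
  apply: isotropic_orth uu => [t|].
    by have := psd (fun i => c i + t * (i == j)%:R); rewrite comb_add.
  by have := psd (fun i => (i == j)%:R); rewrite comb_delta.
by move: G0; rewrite (gram_eq0 u0 rad) ltxx.
Qed.

Lemma span_comb (s : seq V) v : v \in <<s>>%VS ->
  exists c : 'I_(size s) -> R, v = comb (nth 0 s) c.
Proof.
move=> sv; exists (fun i => coord (in_tuple s) i v).
exact: (coord_span (X := in_tuple s)).
Qed.

Lemma orth_pos (S : V) (Xs : seq V) (Q : V) :
  lie S S < 0 -> Delta (S :: Xs) < 0 ->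
  Q \in <<S :: Xs>>%VS -> lie Q S = 0 -> Q != 0 -> 0 < lie Q Q.
Proof.
move=> S0 D0 QW QS Q0; set f := nth 0 (S :: Xs).
have f0 : lie (f 0%N) (f 0%N) != 0 := ltr0_neq0 S0.
have G0 : 0 < gram (perp0 f) (size Xs).
  by move: D0; rewrite DeltaE gram_schur // nmulr_rlt0.
have perpS i : lie (perp0 f i) S = 0 := lie_perp0 i f0.
have [c QE] := span_comb QW; have [a QE'] := comb_split0 f c.
have a0 : a = 0.
  move: QS; rewrite QE QE' lieDl lieZl lie_comb_orth // addr0 => /eqP.
  by rewrite mulf_eq0 (negPf f0) orbF => /eqP.
rewrite QE QE' a0 scale0r add0r in Q0 *.
exact: gram_gt0_pos S0 perpS G0 Q0.
Qed.

(* Consequently Delta(X, S) < 0 for every X in <X_1, ..., X_k, S> off the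
   line <S>: decompose X = Q + a S with Q orthogonal to S. *)
Lemma Delta2_lt0 (S X : V) (Xs : seq V) :
  lie S S < 0 -> Delta (rcons Xs S) < 0 ->
  X \in <<rcons Xs S>>%VS -> X \notin <[S]>%VS -> Delta [:: X; S] < 0.
Proof.
move=> S0 D0 XW XS; set Q := X - (lie X S / lie S S) *: S.
have S0' := ltr0_neq0 S0.
have span_rot : <<rcons Xs S>>%VS = <<S :: Xs>>%VS.
  by apply: eq_span => Z; rewrite mem_rcons.
have QW : Q \in <<S :: Xs>>%VS.
  by rewrite -span_rot rpredB // rpredZ // memv_span // mem_rcons mem_head.
have QS : lie Q S = 0 by rewrite /Q lieBl lieZl mulfVK // subrr.
have Q0 : Q != 0.
  apply: contra XS => /eqP Q0; apply/vlineP; exists (lie X S / lie S S).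
  by apply/eqP; rewrite -subr_eq0 -/Q Q0.
have rot : perm_eq (rcons Xs S) (S :: Xs) by rewrite perm_rcons.
rewrite (Delta_perm rot) in D0.
have -> : Delta [:: X; S] = lie S S * lie Q Q.
  by rewrite Delta2 /Q !(lieBl, lieBr, lieZl, lieZr) (lieC S X); field.
by rewrite nmulr_rlt0 // (orth_pos S0 D0 QW QS Q0).
Qed.

Lemma exists_orth2 (w : seq V) (S Y : V) : free w -> (2 < size w)%N ->
  exists X0, [/\ X0 \in <<w>>%VS, X0 != 0, lie X0 S = 0 & lie X0 Y = 0].
Proof.
move=> wfree w3; have [c [i ci] [cS cY]] :=
  exists_kernel2 (fun i => lie w`_i S) (fun i => lie w`_i Y) w3.
exists (comb (nth 0 w) c); split; rewrite ?lie_combl //.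
  by apply: rpred_sum => j _; rewrite rpredZ // memv_span // mem_nth.
apply: contra ci => /eqP w0; apply/eqP.
by move/(@freeP _ _ _ (in_tuple w)): wfree; apply.
Qed.
End Signature.

Section Derivative.
Variable R : realFieldType.

Lemma has_deriv_ext (f g : R -> R) t0 l :
  (forall t, f t = g t) -> has_deriv g t0 l -> has_deriv f t0 l.
Proof.
move=> fg gd eps eps0; have [d d0 gdd] := gd eps eps0.
by exists d => // t t0d; rewrite !fg; apply: gdd.
Qed.

Lemma has_deriv0_bound (f : R -> R) (M d : R) : 0 < d ->
  (forall t, 0 < `|t| < d -> `|(f t - f 0) / t| <= M * `|t|) ->
  has_deriv f 0 0.
Proof.
move=> d0 fM eps eps0; have M0 : 0 < `|M| + 1 by rewrite ltr_pwDr ?normr_ge0.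
exists (Num.min d (eps / (`|M| + 1))); first by rewrite lt_min d0 divr_gt0.
move=> t; rewrite subr0 lt_min => /andP [t0 /andP [td teps]].
rewrite subr0; apply: le_lt_trans (fM t _) _; first by rewrite t0 td.
apply: le_lt_trans (ler_wpM2r (normr_ge0 t) (ler_norm M)) _.
rewrite ltr_pdivlMr // in teps; apply: le_lt_trans _ teps.
by rewrite mulrC ler_wpM2l ?normr_ge0 // lerDl.
Qed.

Lemma quadratic_away0 (D0 D1 D2 : R) : D0 != 0 -> exists2 d : R, 0 < d &
  forall t, `|t| < d -> `|D0| / 2 <= `|D0 + D1 * t + D2 * t ^+ 2|.
Proof.
move=> D00; have A0 : 0 < `|D1| + `|D2| + 1.
  by have := normr_ge0 D1; have := normr_ge0 D2; lra.
have D0p : 0 < `|D0| by rewrite normr_gt0.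
exists (Num.min 1 (`|D0| / (2 * (`|D1| + `|D2| + 1)))).
  by rewrite lt_min ltr01 divr_gt0 // mulr_gt0.
move=> t; rewrite lt_min => /andP [t1 td].
rewrite ltr_pdivlMr ?mulr_gt0 // in td.
have small : `|D1 * t + D2 * t ^+ 2| <= `|t| * (`|D1| + `|D2| + 1).
  rewrite (_ : D1 * t + D2 * t ^+ 2 = t * (D1 + D2 * t)); last by ring.
  rewrite normrM ler_wpM2l // (le_trans (ler_normD _ _)) // normrM.
  have : `|D2| * `|t| <= `|D2| by rewrite ler_piMr // ltW.
  by have := normr_ge0 D1; lra.
have := lerB_normD D0 (D1 * t + D2 * t ^+ 2); rewrite addrA.
by move: td; lra.
Qed.

(* The ratio (a (D0 + D1 t) + N2 t^2) / (D(t) K), D(t) = D0 + D1 t + D2 t^2,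
   is stationary at t = 0: its first-order terms cancel. *)
Lemma has_deriv_ratio (a N2 D0 D1 D2 K : R) : D0 != 0 -> K != 0 ->
  has_deriv (fun t => (a * (D0 + D1 * t) + N2 * t ^+ 2) /
                      ((D0 + D1 * t + D2 * t ^+ 2) * K)) 0 0.
Proof.
move=> D00 K0; have [d d0 Dhalf] := quadratic_away0 D1 D2 D00.
have D0p : 0 < `|D0| by rewrite normr_gt0.
have Kp : 0 < `|K| by rewrite normr_gt0.
apply: (has_deriv0_bound (M := 2 * `|N2 - a * D2| / (`|D0| * `|K|)) d0).
move=> t /andP [t0 td]; have Dt_ge := Dhalf t td.
have Dtp : 0 < `|D0 + D1 * t + D2 * t ^+ 2|.
  by apply: lt_le_trans Dt_ge; rewrite divr_gt0.
rewrite mulr0 expr0n /= mulr0 !addr0 (_ : _ / t =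
  (N2 - a * D2) * t / ((D0 + D1 * t + D2 * t ^+ 2) * K)); last first.
  by field; rewrite K0 D00 -!normr_gt0 Dtp t0.
move: (D0 + D1 * t + D2 * t ^+ 2) Dt_ge Dtp => Dt Dt_ge Dtp.
rewrite !normrM normfV normrM ler_pdivrMr ?mulr_gt0 //.
have -> : 2 * `|N2 - a * D2| / (`|D0| * `|K|) * `|t| * (`|Dt| * `|K|) =
    `|N2 - a * D2| * `|t| * (2 * `|Dt| / `|D0|).
  by field; rewrite !normr_eq0 K0 D00.
by rewrite ler_peMr ?mulr_ge0 ?normr_ge0 // ler_pdivlMr // mul1r; lra.
Qed.
End Derivative.

Section Discriminant.
Variables (R : realFieldType) (n : nat).
Local Notation V := 'rV[R]_(n.+3).

(* Delta(X, Y, S) = (Y - P | Y - P) Delta(X, S) when P is the Lie orthogonal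
   projection of Y onto <X, S>: Y - P splits off the Gram determinant. *)
Lemma Delta_proj (Xs : seq V) (S Y P : V) :
  P \in <<rcons Xs S>>%VS ->
  (forall Z, Z \in <<rcons Xs S>>%VS -> lie (Y - P) Z = 0) ->
  Delta (Xs ++ [:: Y; S]) = lie (Y - P) (Y - P) * Delta (rcons Xs S).
Proof.
set W := rcons Xs S => PW Pperp.
have -> : Delta (Xs ++ [:: Y; S]) = Delta (rcons W Y).
  apply: Delta_perm; rewrite /W -!cats1 -catA perm_cat2l.
  by rewrite perm_sym (perm_catC [:: S]).
rewrite -Delta_cons_orth => [|Z ZW]; last exact/Pperp/memv_span.
have [c PE] := span_comb PW; rewrite !DeltaE size_rcons /=.
pose c' (i : 'I_(size W).+1) := if unlift ord_max i is Some i' then - c i' else 1.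
rewrite (gram_exchange (f := nth 0 (rcons W Y)) (h := nth 0 ((Y - P) :: W))
  (j := ord_max) (c := c')).
- by rewrite /c' unlift_none expr1n mul1r.
- rewrite /comb big_ord_recr /= /c' unlift_none scale1r addrC PE /comb -sumrN.
  congr (_ + _); first by rewrite nth_rcons ltnn eqxx.
  apply: eq_bigr => i _.
  rewrite (_ : widen_ord _ i = lift ord_max i) ?liftK; last first.
    by apply: val_inj; rewrite /= /bump leqNgt ltn_ord.
  by rewrite /= nth_rcons ltn_ord scaleNr.
- by move=> i iW; rewrite /bump leqNgt iW /= nth_rcons iW.
Qed.
End Discriminant.

Section CriticalPoints.
Variables (R : realFieldType) (n : nat).
Local Notation V := 'rV[R]_(n.+3).

(* For an isotropic Y, h(X) = hnum(X, X) / (hden(X, X) * -(Y|S)^2), where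
   hnum = Delta(., Y, S) and hden = Delta(., S) are polarized as symmetric
   bilinear forms in X. *)
Definition hnum (Y S X Z : V) : R :=
  lie Y S * (lie X Y * lie Z S + lie Z Y * lie X S)
  - lie X Z * lie Y S ^+ 2 - lie S S * lie X Y * lie Z Y.

Definition hden (S X Z : V) : R := lie X Z * lie S S - lie X S * lie Z S.

Lemma Delta_hden (S X : V) : Delta [:: X; S] = hden S X X.
Proof. by rewrite Delta2 /hden expr2. Qed.

Lemma hfunE (Y S X : V) : lie Y Y = 0 ->
  hfun Y S X = hnum Y S X X / (hden S X X * - lie Y S ^+ 2).
Proof.
by move=> YY; rewrite /hfun Delta3 !Delta2 YY /hnum /hden; congr (_ / (_ * _)); ring.
Qed.

Lemma hnum_line (Y S X Z : V) t : hnum Y S (X + t *: Z) (X + t *: Z) =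
  hnum Y S X X + 2 * hnum Y S X Z * t + hnum Y S Z Z * t ^+ 2.
Proof. by rewrite /hnum !(lieDl, lieDr, lieZl, lieZr) (lieC Z X); ring. Qed.

Lemma hden_line (S X Z : V) t : hden S (X + t *: Z) (X + t *: Z) =
  hden S X X + 2 * hden S X Z * t + hden S Z Z * t ^+ 2.
Proof. by rewrite /hden !(lieDl, lieDr, lieZl, lieZr) (lieC Z X); ring. Qed.

Lemma hfun_critical (W : {vspace V}) (Y S X : V) (a : R) :
  lie Y Y = 0 -> lie Y S != 0 -> X \in W -> hden S X X != 0 ->
  (forall Z, Z \in W -> hnum Y S X Z = a * hden S X Z) ->
  critical_point W (hfun Y S) X /\ hfun Y S X = a / - lie Y S ^+ 2.
Proof.
move=> YY YS XW D0 prop; have K0 : - lie Y S ^+ 2 != 0 by rewrite oppr_eq0 expf_neq0.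
split; last by rewrite hfunE // prop //; field; rewrite D0 YS.
move=> Z ZW; apply: (has_deriv_ext _ (has_deriv_ratio a (hnum Y S Z Z)
  (2 * hden S X Z) (hden S Z Z) D0 K0)) => t.
by rewrite hfunE // hnum_line hden_line !prop //; congr (_ / _); ring.
Qed.

Lemma proj_lie (W : {vspace V}) (Y P Z : V) :
  (forall Z, Z \in W -> lie (Y - P) Z = 0) -> Z \in W -> lie P Z = lie Y Z.
Proof. by move=> Pperp /Pperp /eqP; rewrite lieBl subr_eq0 => /eqP. Qed.

Lemma proj_critical (Xs : seq V) (S Y P : V) :
  lie Y Y = 0 -> lie Y S != 0 -> Delta (rcons Xs S) != 0 ->
  P \in <<rcons Xs S>>%VS ->
  (forall Z, Z \in <<rcons Xs S>>%VS -> lie (Y - P) Z = 0) ->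
  Delta [:: P; S] != 0 ->
  critical_point <<rcons Xs S>>%VS (hfun Y S) P /\ hfun Y S P = discr Xs Y S.
Proof.
move=> YY YS DW PW Pperp DP; rewrite Delta_hden in DP.
have SW : S \in <<rcons Xs S>>%VS by rewrite memv_span // mem_rcons mem_head.
have PY Z : Z \in <<rcons Xs S>>%VS -> lie Z Y = lie P Z.
  by move=> ZW; rewrite lieC (proj_lie Pperp ZW).
have prop Z : Z \in <<rcons Xs S>>%VS -> hnum Y S P Z = - lie P P * hden S P Z.
  by move=> ZW; rewrite /hnum /hden !PY // (proj_lie Pperp SW); ring.
have [Pcrit Pval] := hfun_critical YY YS PW DP prop.
split=> //; rewrite Pval /discr (Delta_proj PW Pperp) Delta2 YY mul0r sub0r.
by rewrite !(lieBl, lieBr) YY (lieC Y P) PY //; field; rewrite YS DW.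
Qed.

Lemma orth_critical (W : {vspace V}) (S Y X0 : V) :
  lie Y Y = 0 -> lie Y S != 0 -> lie S S != 0 -> X0 \in W ->
  lie X0 S = 0 -> lie X0 Y = 0 -> Delta [:: X0; S] != 0 ->
  critical_point W (hfun Y S) X0 /\ hfun Y S X0 = 1 / lie S S.
Proof.
move=> YY YS SS X0W X0S X0Y DX; rewrite Delta_hden in DX.
have prop Z : Z \in W -> hnum Y S X0 Z = - lie Y S ^+ 2 / lie S S * hden S X0 Z.
  by move=> _; rewrite /hnum /hden X0S X0Y; field.
have [X0crit X0val] := hfun_critical YY YS X0W DX prop.
by split=> //; rewrite X0val; field; rewrite SS YS.
Qed.

Lemma orth_notin_line (S X : V) :
  lie S S != 0 -> X != 0 -> lie X S = 0 -> X \notin <[S]>%VS.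
Proof.
move=> SS X0 XS; apply: contra X0 => /vlineP [a XE].
move: XS; rewrite XE lieZl => /eqP; rewrite mulf_eq0 (negPf SS) orbF.
by move=> /eqP ->; rewrite scale0r.
Qed.
End CriticalPoints.

Unset Implicit Arguments. Set Strict Implicit.

Theorem mainTheorem10 (R : realFieldType) (n : nat) (Xs : seq 'rV[R]_(n.+3))
    (S Y P : 'rV[R]_(n.+3)) :
  (3 <= n)%N ->
  (2 <= size Xs)%N -> (size Xs <= n - 1)%N ->
  (forall X, X \in Xs -> lie X X = 0) ->
  lie S S <= 0 ->
  free (rcons Xs S) ->
  Delta (rcons Xs S) < 0 ->
  lie Y Y = 0 -> Y != 0 ->
  Y \notin <<rcons Xs S>>%VS ->
  lie Y S != 0 ->
  (* P = P_<X,S> Y : the Lie orthogonal projection of Y onto <X,S> along <X,S>^perp *)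
  P \in <<rcons Xs S>>%VS ->
  (forall Z, Z \in <<rcons Xs S>>%VS -> lie (Y - P) Z = 0) ->
  (* p <> s *)
  P \notin <[S]>%VS ->
  [/\ Delta [:: P; S] != 0,
      hfun Y S P = discr Xs Y S,
      critical_point <<rcons Xs S>>%VS (hfun Y S) P
    & lie S S < 0 ->
      (exists X0, [/\ X0 \in <<rcons Xs S>>%VS, lie X0 S = 0,
                      X0 \notin <[S]>%VS & lie X0 Y = 0]) /\
      (forall X0, X0 \in <<rcons Xs S>>%VS -> lie X0 S = 0 ->
                  X0 \notin <[S]>%VS -> lie X0 Y = 0 ->
         [/\ Delta [:: X0; S] != 0,
             critical_point <<rcons Xs S>>%VS (hfun Y S) X0
           & hfun Y S X0 = 1 / lie S S])].
Proof.
move=> _ Xs2 _ _ SS0 Wfree DW YY _ _ YS PW Pperp PS.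
have SW : S \in <<rcons Xs S>>%VS by rewrite memv_span // mem_rcons mem_head.
have DP : Delta [:: P; S] != 0.
  move: SS0; rewrite le_eqVlt => /orP [/eqP s0 | s0].
    by rewrite Delta2 s0 mulr0 sub0r oppr_eq0 (proj_lie Pperp SW) expf_neq0.
  exact/ltr0_neq0/(Delta2_lt0 s0 DW PW PS).
have [Pcrit Pval] := proj_critical YY YS (ltr0_neq0 DW) PW Pperp DP.
split => // s0; split=> [|X0 X0W X0S X0L X0Y].
  have W3 : (2 < size (rcons Xs S))%N by rewrite size_rcons.
  have [X0 [X0W X00 X0S X0Y]] := exists_orth2 S Y Wfree W3.
  by exists X0; split => //; apply: orth_notin_line; rewrite ?ltr0_neq0.
have DX := ltr0_neq0 (Delta2_lt0 s0 DW X0W X0L).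
by have [] := orth_critical YY YS (ltr0_neq0 s0) X0W X0S X0Y DX.
Qed.
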